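(* Let $\lambda_1,\lambda_2,\lambda_3\in\mathbb{R}$ with $0<\lambda_2<(2+2\sqrt2)\lambda_1$ and $\lambda_3>0$. Then $(z_1,z_2)=(0,0)$ is the only real solution of the system $$\lambda_1z_1+\lambda_3(z_1-z_2)+\lambda_2\frac{z_1^2(z_1-1)}{1+z_1^2}=0,\qquad \lambda_1z_2+\lambda_3(z_2-z_1)+\lambda_2\frac{z_2^2(z_2-1)}{1+z_2^2}=0.$$ *)

From Stdlib Require Import Reals.
Open Scope R_scope.

Definition F1 (l1 l2 l3 z1 z2 : R) : R :=
  l1 * z1 + l3 * (z1 - z2) + l2 * (z1 ^ 2 * (z1 - 1) / (1 + z1 ^ 2)).
Definition F2 (l1 l2 l3 z1 z2 : R) : R :=
  l1 * z2 + l3 * (z2 - z1) + l2 * (z2 ^ 2 * (z2 - 1) / (1 + z2 ^ 2)).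

(* Write the system as  g z1 + l3 (z1 - z2) = 0,  g z2 + l3 (z2 - z1) = 0
   with the single-cell term  g z = l1 z + l2 z^2 (z - 1) / (1 + z^2).
   Since  g z = z Q(z) / (1 + z^2)  with the quadratic
   Q(z) = (l1 + l2) z^2 - l2 z + l1, the point is that Q has no real root
   exactly when its discriminant  l2^2 - 4 l1 (l1 + l2)  is negative, which
   is what the bound  l2 < (2 + 2 sqrt 2) l1  guarantees.  Hence z g(z) > 0
   for every z <> 0.  Multiplying the two equations by z1 and z2 and adding
   gives  z1 g(z1) + z2 g(z2) + l3 (z1 - z2)^2 = 0, a sum of nonnegative
   terms, so z1 = z2 = 0. *)

From Stdlib Require Import Reals Lra Psatz.
Open Scope R_scope.

(* The hypothesis  0 < l2 < (2 + 2 sqrt 2) l1  forces l1 > 0 and a negative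
   discriminant: the upper root of  x^2 - 4 l1 x - 4 l1^2  is (2+2 sqrt 2) l1. *)
Lemma discriminant_neg (l1 l2 : R) :
  0 < l2 -> l2 < (2 + 2 * sqrt 2) * l1 ->
  0 < l1 /\ l2 ^ 2 < 4 * l1 * (l1 + l2).
Proof.
  intros h2 h21.
  assert (hss : sqrt 2 * sqrt 2 = 2) by (apply sqrt_sqrt; lra).
  assert (hs1 : 1 < sqrt 2).
  { rewrite <- sqrt_1 at 1. apply sqrt_lt_1_alt. lra. }
  assert (hl1 : 0 < l1) by nra.
  split; [exact hl1|].
  assert (hfac : 4 * l1 * (l1 + l2) - l2 ^ 2
                 = ((2 + 2 * sqrt 2) * l1 - l2) * (l2 + (2 * sqrt 2 - 2) * l1)).
  { transitivity (4 * l1 * (l1 + l2) - l2 ^ 2 + 4 * l1 ^ 2 * (sqrt 2 * sqrt 2 - 2));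
      [rewrite hss; ring | ring]. }
  assert (0 < ((2 + 2 * sqrt 2) * l1 - l2) * (l2 + (2 * sqrt 2 - 2) * l1))
    by (apply Rmult_lt_0_compat; nra).
  lra.
Qed.

Lemma quadratic_pos (l1 l2 z : R) :
  0 < l1 -> l2 ^ 2 < 4 * l1 * (l1 + l2) ->
  0 < l1 * (1 + z ^ 2) + l2 * (z ^ 2 - z).
Proof.
  intros hl1 hdisc.
  assert (hsum : 0 < l1 + l2) by nra.
  assert (hsq : 4 * (l1 + l2) * (l1 * (1 + z ^ 2) + l2 * (z ^ 2 - z))
                = (2 * (l1 + l2) * z - l2) ^ 2 + (4 * l1 * (l1 + l2) - l2 ^ 2))
    by ring.
  assert (0 <= (2 * (l1 + l2) * z - l2) ^ 2) by apply pow2_ge_0.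
  nra.
Qed.

Definition cell (l1 l2 z : R) : R :=
  l1 * z + l2 * (z ^ 2 * (z - 1) / (1 + z ^ 2)).

(* z * cell z = z^2 Q(z) / (1 + z^2), so cell has the sign of z when Q > 0. *)
Lemma cell_sign (l1 l2 z : R) :
  0 < l2 -> l2 < (2 + 2 * sqrt 2) * l1 -> z <> 0 -> 0 < z * cell l1 l2 z.
Proof.
  intros h2 h21 hz.
  destruct (discriminant_neg l1 l2 h2 h21) as [hl1 hdisc].
  pose proof (quadratic_pos l1 l2 z hl1 hdisc) as hQ.
  assert (hden : 0 < 1 + z ^ 2) by nra.
  assert (hz2 : 0 < z ^ 2) by (rewrite <- Rsqr_pow2; apply Rsqr_pos_lt; exact hz).
  assert (hfac : z * cell l1 l2 z
                 = z ^ 2 * (l1 * (1 + z ^ 2) + l2 * (z ^ 2 - z)) / (1 + z ^ 2)).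
  { unfold cell. field. lra. }
  rewrite hfac. apply Rdiv_lt_0_compat; [apply Rmult_lt_0_compat|]; assumption.
Qed.

(* Indeed z1 g z1 + z2 g z2 + l3 (z1 - z2)^2 = 0 is a sum of nonnegative terms. *)
Lemma coupled_equilibrium_trivial (g : R -> R) (l3 a b : R) :
  0 <= l3 -> (forall z, z <> 0 -> 0 < z * g z) ->
  g a + l3 * (a - b) = 0 -> g b + l3 * (b - a) = 0 ->
  a = 0 /\ b = 0.
Proof.
  intros h3 hg Ea Eb.
  assert (henergy : a * g a + b * g b + l3 * (a - b) ^ 2 = 0).
  { transitivity (a * (g a + l3 * (a - b)) + b * (g b + l3 * (b - a))); [ring|].
    rewrite Ea, Eb. ring. }
  assert (hnonneg : forall z, 0 <= z * g z).
  { intro z. destruct (Req_dec z 0) as [->|hz]; [lra|].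
    apply Rlt_le, hg, hz. }
  assert (0 <= l3 * (a - b) ^ 2) by (apply Rmult_le_pos; [|apply pow2_ge_0]; lra).
  pose proof (hnonneg a). pose proof (hnonneg b).
  split.
  - destruct (Req_dec a 0) as [ha|ha]; [exact ha|].
    pose proof (hg a ha). lra.
  - destruct (Req_dec b 0) as [hb|hb]; [exact hb|].
    pose proof (hg b hb). lra.
Qed.

Theorem lemmaF3 (l1 l2 l3 : R)
  (h2 : 0 < l2) (h21 : l2 < (2 + 2 * sqrt 2) * l1) (h3 : 0 < l3) :
  F1 l1 l2 l3 0 0 = 0 /\ F2 l1 l2 l3 0 0 = 0 /\
  (forall z1 z2 : R, F1 l1 l2 l3 z1 z2 = 0 -> F2 l1 l2 l3 z1 z2 = 0 ->
     z1 = 0 /\ z2 = 0).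
Proof.
  assert (hF1 : forall z1 z2, F1 l1 l2 l3 z1 z2 = cell l1 l2 z1 + l3 * (z1 - z2))
    by (intros; unfold F1, cell; ring).
  assert (hF2 : forall z1 z2, F2 l1 l2 l3 z1 z2 = cell l1 l2 z2 + l3 * (z2 - z1))
    by (intros; unfold F2, cell; ring).
  split; [|split].
  - unfold F1, Rdiv. ring.
  - unfold F2, Rdiv. ring.
  - intros z1 z2 E1 E2. rewrite hF1 in E1. rewrite hF2 in E2.
    apply (coupled_equilibrium_trivial (cell l1 l2) l3); [lra| |exact E1|exact E2].
    intros z hz. exact (cell_sign l1 l2 z h2 h21 hz).
Qed.
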